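(* Let $\nu\in\mathbb{N}$ and $p\in(0,1)$, and let $G_\nu$ and $g_\nu$ be the c.d.f. and p.d.f. of Student's $t$-distribution with $\nu$ degrees of freedom. For $h\in\mathbb{R}$ and $k\in\mathbb{N}$ let $f_1(h,k):=\int_{-\infty}^{\infty}G_\nu^k(t+h)g_\nu(t)\,dt$. Then there exists $K>0$ such that for every $k>K$ the equation $f_1(h,k)=p$ has a unique positive solution $h$. *)

From Stdlib Require Import Reals.
From Coquelicot Require Import Coquelicot.
Open Scope R_scope.

Definition t_kernel (nu : nat) (t : R) : R :=
  Rpower (1 + t ^ 2 / INR nu) (- (INR nu + 1) / 2).

(* Normalizing constant  int_{-oo}^{+oo} t_kernel  (equals
   sqrt(nu pi) Gamma(nu/2) / Gamma((nu+1)/2)). *)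
Definition t_const (nu : nat) : R :=
  RInt_gen (t_kernel nu) (Rbar_locally m_infty) (Rbar_locally p_infty).

Definition t_pdf (nu : nat) (t : R) : R := t_kernel nu t / t_const nu.

Definition t_cdf (nu : nat) (x : R) : R :=
  RInt_gen (t_pdf nu) (Rbar_locally m_infty) (at_point x).

Definition f1 (nu : nat) (h : R) (k : nat) : R :=
  RInt_gen (fun t => (t_cdf nu (t + h)) ^ k * t_pdf nu t)
    (Rbar_locally m_infty) (Rbar_locally p_infty).

From Stdlib Require Import Reals Lra Lia Classical_Pred_Type.
From Coquelicot Require Import Coquelicot.
Open Scope R_scope.

(* The integrand G(t+h)^k g(t) lies between 0 and g and is strictly increasing
   in h, so f1(., k) is strictly increasing and Lipschitz (with constant k sup g).
   At h = 0 it is the derivative of G^(k+1)/(k+1), so f1(0, k) = 1/(k+1) < p once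
   k > 1/p, while f1(h, k) >= G(h-A)^k (G(A) - G(-A)) exceeds p for A, then h,
   large enough; the intermediate value theorem gives the unique positive root.
   The improper integrals exist because the primitive of a nonnegative continuous
   function with bounded integrals is monotone and bounded; for the Student kernel
   the bound comes from (1 + t^2/nu)^(-(nu+1)/2) <= nu / (1 + t^2). *)

Lemma continuous_of_ex_derive (f : R -> R) x : ex_derive f x -> continuous f x.
Proof. apply (ex_derive_continuous (K := R_AbsRing) (V := R_NormedModule)). Qed.

Lemma continuous_filterlim (g : R -> R) x y :
  continuous g x -> g x = y -> filterlim g (locally x) (locally y).
Proof. now intros g_cont <-. Qed.

Lemma filterlim_at_point (f : R -> R) x : filterlim f (at_point x) (locally (f x)).
Proof. intros P HP. exact (locally_singleton _ _ HP). Qed.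

Lemma filter_prod_m_infty_p_infty_le :
  filter_prod (Rbar_locally m_infty) (Rbar_locally p_infty) (fun ab => fst ab <= snd ab).
Proof.
  apply (Filter_prod _ _ _ (fun a => a < 0) (fun b => 0 < b)); [exists 0; now intros..|].
  simpl. intros. lra.
Qed.

Lemma nondecreasing_bounded_lim_p_infty (f : R -> R) (B : R) :
  (forall x y, x <= y -> f x <= f y) -> (forall x, f x <= B) ->
  exists l, filterlim f (Rbar_locally p_infty) (locally l) /\ forall x, f x <= l.
Proof.
  intros f_incr f_le_B.
  destruct (completeness (fun y => exists x, y = f x)) as [l [l_ub l_least]].
  - exists B. intros y [x ->]. apply f_le_B.
  - now exists (f 0), 0.
  - assert (f_le_l : forall x, f x <= l) by (intros x; apply l_ub; now exists x).
    exists l. split; [|exact f_le_l].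
    apply filterlim_locally. intros eps.
    pose proof (cond_pos eps) as eps_pos.
    assert (near_sup : exists x0, l - eps < f x0).
    { apply not_all_not_ex. intros no_x0.
      assert (l <= l - eps); [|lra].
      apply l_least. intros y [x ->]. now apply Rnot_lt_le. }
    destruct near_sup as [x0 Hx0]. exists x0. intros x Hx.
    change (Rabs (f x - l) < eps). specialize (f_le_l x).
    assert (f x0 <= f x) by (apply f_incr; lra).
    apply Rabs_def1; lra.
Qed.

Lemma nondecreasing_bounded_lim_m_infty (f : R -> R) (B : R) :
  (forall x y, x <= y -> f x <= f y) -> (forall x, B <= f x) ->
  exists l, filterlim f (Rbar_locally m_infty) (locally l) /\ forall x, l <= f x.
Proof.
  intros f_incr B_le_f.
  destruct (nondecreasing_bounded_lim_p_infty (fun x => - f (- x)) (- B))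
    as [l [lim_l le_l]].
  - intros x y Hxy. apply Ropp_le_contravar, f_incr. lra.
  - intros x. specialize (B_le_f (- x)). lra.
  - exists (- l). split.
    + apply filterlim_locally. intros eps.
      destruct (proj1 (filterlim_locally _ _) lim_l eps) as [M HM].
      exists (- M). intros x Hx. specialize (HM (- x) ltac:(lra)).
      change (Rabs (- f (- - x) - l) < eps) in HM. change (Rabs (f x - - l) < eps).
      rewrite Ropp_involutive in HM.
      replace (f x - - l) with (- (- f x - l)) by ring. now rewrite Rabs_Ropp.
    + intros x. specialize (le_l (- x)). rewrite Ropp_involutive in le_l. lra.
Qed.

Lemma filterlim_locally_gt {T} {F : (T -> Prop) -> Prop} (f : T -> R) (l c : R) :
  filterlim f F (locally l) -> c < l -> F (fun x => c < f x).
Proof. intros lim_f Hc. apply (lim_f (fun y => c < y)). now apply open_gt. Qed.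

Lemma filterlim_locally_lt {T} {F : (T -> Prop) -> Prop} (f : T -> R) (l c : R) :
  filterlim f F (locally l) -> l < c -> F (fun x => f x < c).
Proof. intros lim_f Hc. apply (lim_f (fun y => y < c)). now apply open_lt. Qed.

Lemma pow_Rabs_sub_le a b n : 0 <= a <= 1 -> 0 <= b <= 1 ->
  Rabs (a ^ n - b ^ n) <= INR n * Rabs (a - b).
Proof.
  intros Ha Hb. induction n as [|n IH].
  - simpl. rewrite Rminus_eq_0, Rabs_R0. lra.
  - rewrite S_INR. simpl.
    replace (a * a ^ n - b * b ^ n) with (a * (a ^ n - b ^ n) + b ^ n * (a - b)) by ring.
    eapply Rle_trans; [apply Rabs_triang|]. rewrite !Rabs_mult.
    assert (bn_le_1 : Rabs (b ^ n) <= 1).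
    { rewrite Rabs_pos_eq by (apply pow_le; lra). rewrite <- (pow1 n). apply pow_incr. lra. }
    rewrite (Rabs_pos_eq a) by lra.
    pose proof (Rabs_pos (a ^ n - b ^ n)). pose proof (Rabs_pos (a - b)). nra.
Qed.

Lemma pow_lt_compat a b n : (1 <= n)%nat -> 0 <= a < b -> a ^ n < b ^ n.
Proof.
  intros Hn Hab. destruct n as [|n]; [lia|]. simpl.
  assert (a ^ n <= b ^ n) by (apply pow_incr; lra).
  pose proof (pow_lt b n ltac:(lra)). pose proof (pow_le a n ltac:(lra)). nra.
Qed.

Lemma lipschitz_continuity (f : R -> R) (L : R) :
  (forall x y, Rabs (f x - f y) <= L * Rabs (x - y)) -> continuity f.
Proof.
  intros f_lip x eps eps_pos. pose proof (Rabs_pos L). pose proof (Rle_abs L).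
  exists (eps / (Rabs L + 1)). split; [apply Rdiv_lt_0_compat; lra|].
  intros y [_ Hy]. simpl in *. unfold R_dist in *.
  eapply Rle_lt_trans; [apply f_lip|]. pose proof (Rabs_pos (y - x)).
  apply Rle_lt_trans with ((Rabs L + 1) * Rabs (y - x)); [nra|].
  replace eps with ((Rabs L + 1) * (eps / (Rabs L + 1))) by (field; lra).
  apply Rmult_lt_compat_l; lra.
Qed.

Lemma increasing_unique_crossing (f : R -> R) (a b y : R) :
  continuity f -> (forall x x', x < x' -> f x < f x') ->
  a < b -> f a < y < f b -> exists! x, a < x /\ f x = y.
Proof.
  intros f_cont f_incr Hab [fa_lt_y y_lt_fb].
  destruct (IVT (fun x => f x - y) a b) as [x [[Hax Hxb] Hfx]]; [|exact Hab|lra|lra|].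
  { apply (continuity_minus f (fct_cte y)); [exact f_cont|apply continuity_const; now intros]. }
  exists x. split.
  - split; [|lra]. destruct Hax as [Hax|<-]; [exact Hax|lra].
  - intros x' [_ Hfx']. destruct (Rtotal_order x x') as [Hlt|[Heq|Hgt]]; [|exact Heq|].
    + pose proof (f_incr _ _ Hlt). lra.
    + pose proof (f_incr _ _ Hgt). lra.
Qed.

Section ContinuousIntegrand.

Variable u : R -> R.
Hypothesis u_cont : forall x, continuous u x.

Lemma ex_RInt_cont a b : ex_RInt u a b.
Proof. apply (@ex_RInt_continuous R_CompleteNormedModule). intros; apply u_cont. Qed.

Lemma RInt_sub_origin a b : RInt u a b = RInt u 0 b - RInt u 0 a.
Proof.
  rewrite <- (RInt_Chasles u a 0 b) by apply ex_RInt_cont.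
  rewrite <- (opp_RInt_swap u 0 a) by apply ex_RInt_cont.
  unfold plus, opp; simpl. ring.
Qed.

Lemma is_derive_RInt_origin x : is_derive (fun y => RInt u 0 y) x (u x).
Proof.
  apply is_derive_RInt with 0; [|apply u_cont].
  apply filter_forall. intros y. apply (@RInt_correct R_CompleteNormedModule), ex_RInt_cont.
Qed.

Lemma is_RInt_gen_antiderivative {Fa Fb : (R -> Prop) -> Prop} {FFa : Filter Fa}
    {FFb : Filter Fb} (F : R -> R) (la lb : R) :
  (forall x, is_derive F x (u x)) ->
  filterlim F Fa (locally la) -> filterlim F Fb (locally lb) ->
  is_RInt_gen u Fa Fb (lb - la).
Proof.
  intros F_deriv lim_a lim_b.
  assert (DF : forall x, Derive F x = u x) by (intros x; apply is_derive_unique, F_deriv).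
  apply (is_RInt_gen_ext (Derive F)).
  { apply filter_forall. intros ab x _. apply DF. }
  apply is_RInt_gen_Derive; [| |exact lim_a|exact lim_b]; apply filter_forall; intros ab x _.
  - eexists. apply F_deriv.
  - apply (continuous_ext u); [intros; now rewrite DF|apply u_cont].
Qed.

Lemma is_RInt_gen_primitive_limits lm lp :
  filterlim (fun x => RInt u 0 x) (Rbar_locally m_infty) (locally lm) ->
  filterlim (fun x => RInt u 0 x) (Rbar_locally p_infty) (locally lp) ->
  is_RInt_gen u (Rbar_locally m_infty) (Rbar_locally p_infty) (lp - lm).
Proof.
  apply is_RInt_gen_antiderivative, is_derive_RInt_origin.
Qed.

End ContinuousIntegrand.

Section NonnegIntegrand.

Variable u : R -> R.
Hypothesis u_cont : forall x, continuous u x.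
Hypothesis u_ge0 : forall x, 0 <= u x.
Variable B : R.
Hypothesis RInt_le_B : forall a b, a <= b -> RInt u a b <= B.

Lemma RInt_nonneg a b : a <= b -> 0 <= RInt u a b.
Proof. intros Hab. apply RInt_ge_0; auto. now apply ex_RInt_cont. Qed.

Lemma primitive_nondecreasing x y : x <= y -> RInt u 0 x <= RInt u 0 y.
Proof.
  intros Hxy. pose proof (RInt_nonneg x y Hxy) as I_ge0.
  rewrite RInt_sub_origin in I_ge0 by exact u_cont. lra.
Qed.

Lemma primitive_limits : exists lm lp,
  filterlim (fun x => RInt u 0 x) (Rbar_locally m_infty) (locally lm) /\
  filterlim (fun x => RInt u 0 x) (Rbar_locally p_infty) (locally lp) /\
  forall x, lm <= RInt u 0 x <= lp.
Proof.
  assert (B_ge0 : 0 <= B).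
  { pose proof (RInt_le_B 0 0 (Rle_refl 0)) as I_le_B. now rewrite RInt_point in I_le_B. }
  assert (primitive_abs_le : forall x, - B <= RInt u 0 x <= B).
  { intros x. destruct (Rle_or_lt 0 x) as [x_ge0|x_lt0].
    - pose proof (RInt_nonneg 0 x x_ge0). pose proof (RInt_le_B 0 x x_ge0). lra.
    - apply Rlt_le in x_lt0.
      rewrite <- opp_RInt_swap by now apply ex_RInt_cont. unfold opp; simpl.
      pose proof (RInt_nonneg x 0 x_lt0). pose proof (RInt_le_B x 0 x_lt0). lra. }
  destruct (nondecreasing_bounded_lim_m_infty (fun x => RInt u 0 x) (- B)) as [lm [lim_m le_m]].
  { exact primitive_nondecreasing. } { apply primitive_abs_le. }
  destruct (nondecreasing_bounded_lim_p_infty (fun x => RInt u 0 x) B) as [lp [lim_p le_p]].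
  { exact primitive_nondecreasing. } { apply primitive_abs_le. }
  exists lm, lp. auto.
Qed.

Lemma ex_RInt_gen_nonneg : ex_RInt_gen u (Rbar_locally m_infty) (Rbar_locally p_infty).
Proof.
  destruct primitive_limits as (lm & lp & lim_m & lim_p & _).
  exists (lp - lm). now apply is_RInt_gen_primitive_limits.
Qed.

Lemma RInt_le_is_RInt_gen l a b : a <= b ->
  is_RInt_gen u (Rbar_locally m_infty) (Rbar_locally p_infty) l -> RInt u a b <= l.
Proof.
  intros Hab Hl. destruct primitive_limits as (lm & lp & lim_m & lim_p & bounds).
  replace l with (lp - lm).
  - rewrite RInt_sub_origin by auto. pose proof (bounds a). pose proof (bounds b). lra.
  - apply (is_RInt_gen_unique (V := R_CompleteNormedModule)) in Hl. rewrite <- Hl. symmetry.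
    now apply (is_RInt_gen_unique (V := R_CompleteNormedModule)), is_RInt_gen_primitive_limits.
Qed.

End NonnegIntegrand.

Section StudentKernel.

Variable nu : nat.
Hypothesis nu_ge1 : (1 <= nu)%nat.

Lemma INR_nu_ge1 : 1 <= INR nu.
Proof. apply (le_INR 1), nu_ge1. Qed.

Lemma t_kernel_base_ge1 t : 1 <= 1 + t ^ 2 / INR nu.
Proof.
  pose proof INR_nu_ge1. pose proof (pow2_ge_0 t).
  assert (0 <= t ^ 2 / INR nu) by (apply Rdiv_le_0_compat; lra). lra.
Qed.

Lemma t_kernel_pos t : 0 < t_kernel nu t.
Proof. apply exp_pos. Qed.

Lemma continuous_t_kernel t : continuous (t_kernel nu) t.
Proof.
  apply continuous_of_ex_derive. unfold t_kernel, Rpower.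
  auto_derive. pose proof (t_kernel_base_ge1 t). simpl in *. lra.
Qed.

Lemma t_kernel_le_inv_base t : t_kernel nu t <= / (1 + t ^ 2 / INR nu).
Proof.
  pose proof INR_nu_ge1. pose proof (t_kernel_base_ge1 t).
  rewrite <- (Rpower_1 (1 + t ^ 2 / INR nu)), <- Rpower_Ropp by lra.
  apply Rle_Rpower; lra.
Qed.

Lemma t_kernel_le_1 t : t_kernel nu t <= 1.
Proof.
  eapply Rle_trans; [apply t_kernel_le_inv_base|].
  pose proof (t_kernel_base_ge1 t).
  apply Rle_trans with (/ 1); [apply Rinv_le_contravar; lra|]. rewrite Rinv_1. lra.
Qed.

Lemma t_kernel_le_cauchy t : t_kernel nu t <= INR nu / (1 + t ^ 2).
Proof.
  eapply Rle_trans; [apply t_kernel_le_inv_base|].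
  pose proof INR_nu_ge1. pose proof (pow2_ge_0 t).
  replace (/ (1 + t ^ 2 / INR nu)) with (INR nu / (INR nu + t ^ 2)) by (field; lra).
  apply Rmult_le_compat_l; [lra|]. apply Rinv_le_contravar; lra.
Qed.

Lemma RInt_t_kernel_le a b : a <= b -> RInt (t_kernel nu) a b <= INR nu * PI.
Proof.
  intros Hab.
  assert (cauchy_cont : forall t, continuous (fun t => INR nu / (1 + t ^ 2)) t).
  { intros t. apply continuous_of_ex_derive. auto_derive.
    pose proof (pow2_ge_0 t). simpl in *. lra. }
  assert (RInt_cauchy :
    RInt (fun t => INR nu / (1 + t ^ 2)) a b = INR nu * atan b - INR nu * atan a).
  { apply is_RInt_unique, (is_RInt_derive (fun t => INR nu * atan t));
      [|intros; apply cauchy_cont].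
    intros x _. apply is_derive_scal, is_derive_Reals, derivable_pt_lim_atan. }
  apply Rle_trans with (INR nu * atan b - INR nu * atan a).
  - rewrite <- RInt_cauchy.
    apply RInt_le;
      [exact Hab|apply ex_RInt_cont, continuous_t_kernel|apply ex_RInt_cont, cauchy_cont|].
    intros; apply t_kernel_le_cauchy.
  - pose proof (atan_bound a). pose proof (atan_bound b). pose proof INR_nu_ge1. nra.
Qed.

Lemma is_RInt_gen_t_kernel :
  is_RInt_gen (t_kernel nu) (Rbar_locally m_infty) (Rbar_locally p_infty) (t_const nu).
Proof.
  apply (RInt_gen_correct (V := R_CompleteNormedModule)), ex_RInt_gen_nonneg with (INR nu * PI).
  - apply continuous_t_kernel.
  - intros; apply Rlt_le, t_kernel_pos.
  - apply RInt_t_kernel_le.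
Qed.

Lemma t_const_pos : 0 < t_const nu.
Proof.
  apply Rlt_le_trans with (RInt (t_kernel nu) (-1) 1).
  - apply RInt_gt_0; [lra|intros; apply t_kernel_pos|intros; apply continuous_t_kernel].
  - apply (RInt_le_is_RInt_gen _ continuous_t_kernel) with (INR nu * PI).
    + intros; apply Rlt_le, t_kernel_pos.
    + apply RInt_t_kernel_le.
    + lra.
    + apply is_RInt_gen_t_kernel.
Qed.

End StudentKernel.

Section StudentDistribution.

Variable nu : nat.
Hypothesis nu_ge1 : (1 <= nu)%nat.

Lemma t_pdf_pos t : 0 < t_pdf nu t.
Proof. apply Rdiv_lt_0_compat; [apply t_kernel_pos|apply t_const_pos, nu_ge1]. Qed.

Lemma continuous_t_pdf t : continuous (t_pdf nu) t.
Proof.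
  apply (continuous_mult (K := R_AbsRing) (t_kernel nu) (fun _ => / t_const nu)).
  - now apply continuous_t_kernel.
  - apply continuous_const.
Qed.

Lemma t_pdf_le t : t_pdf nu t <= / t_const nu.
Proof.
  pose proof (t_kernel_le_1 nu nu_ge1 t). pose proof (t_kernel_pos nu t).
  pose proof (Rinv_0_lt_compat _ (t_const_pos nu nu_ge1)). unfold t_pdf, Rdiv. nra.
Qed.

Lemma RInt_t_pdf a b : RInt (t_pdf nu) a b = / t_const nu * RInt (t_kernel nu) a b.
Proof.
  rewrite <- (RInt_scal (V := R_CompleteNormedModule));
    [|apply ex_RInt_cont, continuous_t_kernel, nu_ge1].
  apply RInt_ext. intros. unfold t_pdf, scal; simpl. unfold mult; simpl. unfold Rdiv. ring.
Qed.

Lemma is_RInt_gen_t_pdf :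
  is_RInt_gen (t_pdf nu) (Rbar_locally m_infty) (Rbar_locally p_infty) 1.
Proof.
  pose proof (t_const_pos nu nu_ge1) as C_pos.
  pose proof (is_RInt_gen_scal (V := R_NormedModule) _ (/ t_const nu) _
    (is_RInt_gen_t_kernel nu nu_ge1)) as scaled.
  change (scal (/ t_const nu) (t_const nu)) with (/ t_const nu * t_const nu) in scaled.
  rewrite Rinv_l in scaled by lra.
  revert scaled. apply is_RInt_gen_ext, filter_forall. intros ab t _.
  apply Rmult_comm.
Qed.

Lemma t_cdf_as_primitive : exists lm : R,
  filterlim (fun x => RInt (t_pdf nu) 0 x) (Rbar_locally m_infty) (locally lm) /\
  filterlim (fun x => RInt (t_pdf nu) 0 x) (Rbar_locally p_infty) (locally (lm + 1)) /\
  (forall x, lm <= RInt (t_pdf nu) 0 x <= lm + 1) /\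
  forall x, t_cdf nu x = RInt (t_pdf nu) 0 x - lm.
Proof.
  assert (t_pdf_ge0 : forall t, 0 <= t_pdf nu t) by (intros; apply Rlt_le, t_pdf_pos).
  destruct (primitive_limits (t_pdf nu) continuous_t_pdf t_pdf_ge0 (/ t_const nu * (INR nu * PI)))
    as (lm & lp & lim_m & lim_p & bounds).
  { intros a b Hab. rewrite RInt_t_pdf.
    apply Rmult_le_compat_l; [apply Rlt_le, Rinv_0_lt_compat, t_const_pos, nu_ge1|].
    now apply RInt_t_kernel_le. }
  assert (total : lp - lm = 1).
  { pose proof is_RInt_gen_t_pdf as total_pdf.
    apply (is_RInt_gen_unique (V := R_CompleteNormedModule)) in total_pdf.
    rewrite <- total_pdf. symmetry.
    now apply (is_RInt_gen_unique (V := R_CompleteNormedModule)),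
      (is_RInt_gen_primitive_limits _ continuous_t_pdf). }
  exists lm. replace (lm + 1) with lp by (clear -total; lra).
  split; [|split; [|split]]; [assumption..|].
  intros x. unfold t_cdf.
  apply (is_RInt_gen_unique (V := R_CompleteNormedModule) (Fb := at_point x)).
  apply (is_RInt_gen_antiderivative _ continuous_t_pdf (fun y => RInt (t_pdf nu) 0 y)).
  - apply is_derive_RInt_origin, continuous_t_pdf.
  - exact lim_m.
  - apply filterlim_at_point.
Qed.

Lemma t_cdf_sub a b : t_cdf nu b - t_cdf nu a = RInt (t_pdf nu) a b.
Proof.
  destruct t_cdf_as_primitive as (lm & _ & _ & _ & cdf_eq).
  rewrite !cdf_eq, (RInt_sub_origin _ continuous_t_pdf a b). ring.
Qed.

Lemma is_derive_t_cdf x : is_derive (t_cdf nu) x (t_pdf nu x).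
Proof.
  destruct t_cdf_as_primitive as (lm & _ & _ & _ & cdf_eq).
  apply (is_derive_ext (fun y => RInt (t_pdf nu) 0 y - lm)); [intros; now rewrite cdf_eq|].
  replace (t_pdf nu x) with (minus (t_pdf nu x) 0) by (unfold minus, plus, opp, zero; simpl; ring).
  apply (is_derive_minus (K := R_AbsRing) (V := R_NormedModule)
    (fun y => RInt (t_pdf nu) 0 y) (fun _ => lm)).
  - apply is_derive_RInt_origin, continuous_t_pdf.
  - exact (is_derive_const (K := R_AbsRing) (V := R_NormedModule) lm x).
Qed.

Lemma continuous_t_cdf x : continuous (t_cdf nu) x.
Proof.
  apply continuous_of_ex_derive.
  eexists. apply is_derive_t_cdf.
Qed.

Lemma t_cdf_bounds x : 0 <= t_cdf nu x <= 1.
Proof.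
  destruct t_cdf_as_primitive as (lm & _ & _ & bounds & cdf_eq).
  rewrite cdf_eq. specialize (bounds x). lra.
Qed.

Lemma t_cdf_lim_m_infty : filterlim (t_cdf nu) (Rbar_locally m_infty) (locally 0).
Proof.
  destruct t_cdf_as_primitive as (lm & lim_m & _ & _ & cdf_eq).
  apply (filterlim_ext (fun x => RInt (t_pdf nu) 0 x - lm)); [intros; now rewrite cdf_eq|].
  apply (filterlim_comp _ _ _ _ (fun y => y - lm) _ _ _ lim_m), continuous_filterlim; [|ring].
  apply continuous_of_ex_derive. auto_derive. exact I.
Qed.

Lemma t_cdf_lim_p_infty : filterlim (t_cdf nu) (Rbar_locally p_infty) (locally 1).
Proof.
  destruct t_cdf_as_primitive as (lm & _ & lim_p & _ & cdf_eq).
  apply (filterlim_ext (fun x => RInt (t_pdf nu) 0 x - lm)); [intros; now rewrite cdf_eq|].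
  apply (filterlim_comp _ _ _ _ (fun y => y - lm) _ _ _ lim_p), continuous_filterlim; [|ring].
  apply continuous_of_ex_derive. auto_derive. exact I.
Qed.

Lemma t_cdf_increasing a b : a < b -> t_cdf nu a < t_cdf nu b.
Proof.
  intros Hab. assert (0 < RInt (t_pdf nu) a b).
  { apply RInt_gt_0; [exact Hab|intros; apply t_pdf_pos|intros; apply continuous_t_pdf]. }
  pose proof (t_cdf_sub a b). lra.
Qed.

Lemma t_cdf_le a b : a <= b -> t_cdf nu a <= t_cdf nu b.
Proof. intros [Hab|<-]; [now apply Rlt_le, t_cdf_increasing|apply Rle_refl]. Qed.

Lemma t_cdf_lipschitz a b : Rabs (t_cdf nu a - t_cdf nu b) <= / t_const nu * Rabs (a - b).
Proof.
  assert (ordered : forall x y, x <= y ->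
    Rabs (t_cdf nu y - t_cdf nu x) <= / t_const nu * (y - x)).
  { intros x y Hxy. rewrite t_cdf_sub, Rmult_comm.
    apply abs_RInt_le_const; [exact Hxy|apply ex_RInt_cont, continuous_t_pdf|].
    intros t _. rewrite Rabs_pos_eq by apply Rlt_le, t_pdf_pos. apply t_pdf_le. }
  destruct (Rle_or_lt a b).
  - rewrite Rabs_minus_sym, (Rabs_minus_sym a), (Rabs_pos_eq (b - a)) by lra. now apply ordered.
  - rewrite (Rabs_pos_eq (a - b)) by lra. apply ordered. lra.
Qed.

Lemma t_cdf_central_mass s : s < 1 -> exists A, 0 < A /\ s < t_cdf nu A - t_cdf nu (- A).
Proof.
  intros s_lt_1.
  destruct (filterlim_locally_gt _ _ ((1 + s) / 2) t_cdf_lim_p_infty) as [M1 HM1]; [lra|].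
  destruct (filterlim_locally_lt _ _ ((1 - s) / 2) t_cdf_lim_m_infty) as [M2 HM2]; [lra|].
  set (A := Rmax 0 (Rmax M1 (- M2)) + 1).
  pose proof (Rmax_l 0 (Rmax M1 (- M2))). pose proof (Rmax_r 0 (Rmax M1 (- M2))).
  pose proof (Rmax_l M1 (- M2)). pose proof (Rmax_r M1 (- M2)).
  exists A. split; [unfold A; lra|].
  specialize (HM1 A ltac:(unfold A; lra)). specialize (HM2 (- A) ltac:(unfold A; lra)). lra.
Qed.

Lemma RInt_le_1_of_le_t_pdf (u : R -> R) a b :
  (forall x, continuous u x) -> (forall t, u t <= t_pdf nu t) -> a <= b -> RInt u a b <= 1.
Proof.
  intros u_cont u_le Hab. apply Rle_trans with (RInt (t_pdf nu) a b).
  - apply RInt_le; [exact Hab|now apply ex_RInt_cont|apply ex_RInt_cont, continuous_t_pdf|].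
    intros; apply u_le.
  - rewrite <- t_cdf_sub. pose proof (t_cdf_bounds a). pose proof (t_cdf_bounds b). lra.
Qed.

End StudentDistribution.

Section Integral_f1.

Variable nu : nat.
Hypothesis nu_ge1 : (1 <= nu)%nat.
Variable k : nat.

Definition f1_integrand (h t : R) : R := t_cdf nu (t + h) ^ k * t_pdf nu t.

Lemma continuous_f1_integrand h t : continuous (f1_integrand h) t.
Proof.
  apply (continuous_mult (K := R_AbsRing) (fun t => t_cdf nu (t + h) ^ k) (t_pdf nu));
    [|now apply continuous_t_pdf].
  apply (continuous_comp (fun t => t_cdf nu (t + h)) (fun y => y ^ k)).
  - apply (continuous_comp (fun t => t + h) (t_cdf nu)); [|now apply continuous_t_cdf].
    apply continuous_of_ex_derive. auto_derive. exact I.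
  - apply continuous_of_ex_derive. auto_derive. exact I.
Qed.

Lemma f1_integrand_bounds h t : 0 <= f1_integrand h t <= t_pdf nu t.
Proof.
  unfold f1_integrand.
  pose proof (t_cdf_bounds nu nu_ge1 (t + h)). pose proof (t_pdf_pos nu nu_ge1 t).
  assert (0 <= t_cdf nu (t + h) ^ k <= 1).
  { split; [apply pow_le; lra|]. rewrite <- (pow1 k). apply pow_incr. lra. }
  nra.
Qed.

Lemma RInt_f1_integrand_le_1 h a b : a <= b -> RInt (f1_integrand h) a b <= 1.
Proof.
  apply (RInt_le_1_of_le_t_pdf nu nu_ge1); [apply continuous_f1_integrand|].
  intros; apply f1_integrand_bounds.
Qed.

Lemma is_RInt_gen_f1 h :
  is_RInt_gen (f1_integrand h) (Rbar_locally m_infty) (Rbar_locally p_infty) (f1 nu h k).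
Proof.
  apply (RInt_gen_correct (V := R_CompleteNormedModule)), ex_RInt_gen_nonneg with 1.
  - apply continuous_f1_integrand.
  - intros; apply f1_integrand_bounds.
  - apply RInt_f1_integrand_le_1.
Qed.

Lemma RInt_f1_integrand_le_f1 h a b : a <= b -> RInt (f1_integrand h) a b <= f1 nu h k.
Proof.
  intros Hab. apply (RInt_le_is_RInt_gen _ (continuous_f1_integrand h)) with 1.
  - intros; apply f1_integrand_bounds.
  - apply RInt_f1_integrand_le_1.
  - exact Hab.
  - apply is_RInt_gen_f1.
Qed.

Lemma f1_at_0 : f1 nu 0 k = / (INR k + 1).
Proof.
  assert (Sk_pos : 0 < INR (S k)) by apply lt_0_INR, Nat.lt_0_succ.
  set (F t := / INR (S k) * t_cdf nu t ^ S k).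
  assert (F_deriv : forall x, is_derive F x (f1_integrand 0 x)).
  { intros x. unfold f1_integrand. rewrite Rplus_0_r.
    replace (t_cdf nu x ^ k * t_pdf nu x)
      with (/ INR (S k) * (INR (S k) * t_pdf nu x * t_cdf nu x ^ k)) by (field; lra).
    apply is_derive_scal, is_derive_pow, is_derive_t_cdf, nu_ge1. }
  assert (F_lim : forall x l, filterlim (t_cdf nu) (Rbar_locally x) (locally l) ->
            filterlim F (Rbar_locally x) (locally (/ INR (S k) * l ^ S k))).
  { intros x l lim_l. apply (filterlim_comp _ _ _ _ (fun y => / INR (S k) * y ^ S k) _ _ _ lim_l).
    apply continuous_filterlim; [|reflexivity].
    apply continuous_of_ex_derive. auto_derive. exact I. }
  apply (is_RInt_gen_unique (V := R_CompleteNormedModule)).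
  replace (/ (INR k + 1)) with (/ INR (S k) * 1 ^ S k - / INR (S k) * 0 ^ S k)
    by (rewrite S_INR, pow1; simpl; ring).
  apply (is_RInt_gen_antiderivative _ (continuous_f1_integrand 0) F _ _ F_deriv);
    apply F_lim; [apply t_cdf_lim_m_infty|apply t_cdf_lim_p_infty]; exact nu_ge1.
Qed.

Lemma f1_increasing h h' : (1 <= k)%nat -> h < h' -> f1 nu h k < f1 nu h' k.
Proof.
  intros k_ge1 Hhh'.
  set (w t := f1_integrand h' t - f1_integrand h t).
  assert (w_cont : forall t, continuous w t).
  { intros t. apply (continuous_minus (K := R_AbsRing) (V := R_NormedModule));
      apply continuous_f1_integrand. }
  assert (w_pos : forall t, 0 < w t).
  { intros t. unfold w, f1_integrand. rewrite <- Rmult_minus_distr_r.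
    apply Rmult_lt_0_compat; [|now apply t_pdf_pos].
    apply Rlt_0_minus, pow_lt_compat; [exact k_ge1|split].
    - apply t_cdf_bounds, nu_ge1.
    - apply t_cdf_increasing; [exact nu_ge1|lra]. }
  assert (w_le : forall t, w t <= t_pdf nu t).
  { intros t. unfold w.
    pose proof (f1_integrand_bounds h t). pose proof (f1_integrand_bounds h' t). lra. }
  assert (w_total :
    is_RInt_gen w (Rbar_locally m_infty) (Rbar_locally p_infty) (f1 nu h' k - f1 nu h k)).
  { apply (is_RInt_gen_minus (V := R_NormedModule)); apply is_RInt_gen_f1. }
  apply Rlt_0_minus, Rlt_le_trans with (RInt w (-1) 1).
  - apply RInt_gt_0; [lra|intros; apply w_pos|intros; apply w_cont].
  - apply (RInt_le_is_RInt_gen w w_cont) with 1; [intros; now apply Rlt_le|..|lra|exact w_total].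
    intros a b. now apply (RInt_le_1_of_le_t_pdf nu nu_ge1).
Qed.

Lemma f1_lipschitz h h' :
  Rabs (f1 nu h k - f1 nu h' k) <= INR k / t_const nu * Rabs (h - h').
Proof.
  set (c := INR k / t_const nu * Rabs (h - h')).
  assert (c_ge0 : 0 <= c).
  { apply Rmult_le_pos; [|apply Rabs_pos].
    apply Rdiv_le_0_compat; [apply pos_INR|now apply t_const_pos]. }
  apply (RInt_gen_norm (V := R_CompleteNormedModule)
    (fun t => f1_integrand h t - f1_integrand h' t) (fun t => c * t_pdf nu t)).
  - apply filter_prod_m_infty_p_infty_le.
  - apply filter_forall. intros ab t _. unfold f1_integrand. rewrite <- Rmult_minus_distr_r.
    change (norm ?x) with (Rabs x). rewrite Rabs_mult, (Rabs_pos_eq (t_pdf nu t))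
      by now apply Rlt_le, t_pdf_pos.
    apply Rmult_le_compat_r; [now apply Rlt_le, t_pdf_pos|].
    eapply Rle_trans; [apply pow_Rabs_sub_le; now apply t_cdf_bounds|].
    eapply Rle_trans; [apply Rmult_le_compat_l; [apply pos_INR|now apply t_cdf_lipschitz]|].
    replace (t + h - (t + h')) with (h - h') by ring. unfold c, Rdiv. lra.
  - apply (is_RInt_gen_minus (V := R_NormedModule)); apply is_RInt_gen_f1.
  - pose proof (is_RInt_gen_scal (V := R_NormedModule) _ c _ (is_RInt_gen_t_pdf nu nu_ge1))
      as scaled.
    change (scal c 1) with (c * 1) in scaled. now rewrite Rmult_1_r in scaled.
Qed.

Lemma f1_ge_central_mass h A : 0 <= A ->
  t_cdf nu (h - A) ^ k * (t_cdf nu A - t_cdf nu (- A)) <= f1 nu h k.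
Proof.
  intros A_ge0. rewrite t_cdf_sub by exact nu_ge1.
  rewrite <- (RInt_scal (V := R_CompleteNormedModule))
    by apply ex_RInt_cont, continuous_t_pdf, nu_ge1.
  apply Rle_trans with (RInt (f1_integrand h) (- A) A); [|apply RInt_f1_integrand_le_f1; lra].
  apply RInt_le; [lra|..].
  - apply ex_RInt_cont. intros t.
    apply (continuous_mult (K := R_AbsRing) (fun _ => t_cdf nu (h - A) ^ k) (t_pdf nu));
      [apply continuous_const|now apply continuous_t_pdf].
  - apply ex_RInt_cont, continuous_f1_integrand.
  - intros t Ht. apply Rmult_le_compat_r; [now apply Rlt_le, t_pdf_pos|].
    apply pow_incr. split; [now apply t_cdf_bounds|]. apply t_cdf_le; [exact nu_ge1|lra].
Qed.

Lemma f1_exceeds q : 0 < q < 1 -> exists h, 0 < h /\ q < f1 nu h k.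
Proof.
  intros Hq. set (s := (1 + q) / 2).
  assert (s_bounds : 0 < s < 1) by (unfold s; lra).
  assert (q_lt_s2 : q < s * s) by (unfold s; nra).
  destruct (t_cdf_central_mass nu nu_ge1 s) as [A [A_pos mass_A]]; [lra|].
  assert (cdf_pow_lim : filterlim (fun x => t_cdf nu x ^ k) (Rbar_locally p_infty) (locally 1)).
  { apply (filterlim_comp _ _ _ _ (fun y => y ^ k) _ _ _ (t_cdf_lim_p_infty nu nu_ge1)).
    apply continuous_filterlim; [|apply pow1].
    apply continuous_of_ex_derive. auto_derive. exact I. }
  destruct (filterlim_locally_gt _ _ s cdf_pow_lim) as [M HM]; [lra|].
  set (h := Rmax (A + M) 0 + 1).
  pose proof (Rmax_l (A + M) 0). pose proof (Rmax_r (A + M) 0).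
  specialize (HM (h - A) ltac:(unfold h; lra)).
  exists h. split; [unfold h; lra|].
  apply Rlt_le_trans with (t_cdf nu (h - A) ^ k * (t_cdf nu A - t_cdf nu (- A))); [nra|].
  apply f1_ge_central_mass. lra.
Qed.

End Integral_f1.

Theorem lemma3 (nu : nat) (p : R) :
  (1 <= nu)%nat -> 0 < p < 1 ->
  exists K : R, 0 < K /\
    forall k : nat, K < INR k ->
      exists! h : R, 0 < h /\ f1 nu h k = p.
Proof.
  intros nu_ge1 Hp. exists (/ p). split; [now apply Rinv_0_lt_compat|].
  intros k Hk. pose proof (Rinv_0_lt_compat p (proj1 Hp)).
  assert (k_ge1 : (1 <= k)%nat) by (apply INR_lt; simpl; lra).
  assert (f1_0_lt_p : f1 nu 0 k < p).
  { rewrite f1_at_0, <- (Rinv_inv p) by exact nu_ge1.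
    apply Rinv_lt_contravar; [apply Rmult_lt_0_compat|]; lra. }
  destruct (f1_exceeds nu nu_ge1 k p Hp) as [h [h_pos p_lt_f1]].
  apply (increasing_unique_crossing (fun h => f1 nu h k) 0 h); [..|lra|lra].
  - apply (lipschitz_continuity _ _ (f1_lipschitz nu nu_ge1 k)).
  - intros x x'. now apply f1_increasing.
Qed.
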